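(* Let ${\overline V}$ be a smooth vector field on a spacetime domain $\Omega\subset\mathbb R^{1+3}$ with $\Box{\overline V}=0$ in $\Omega$. Then for every integer $k\geq0$, \[ \Box D_{\overline V}^k {\overline V}= G_k\qquad\text{in }\Omega, \] where $G_k$ is a linear combination of terms of the form \[ (\nabla D_{\overline V}^{k_1}{\overline V})\cdots(\nabla D_{\overline V}^{k_p}{\overline V})(\nabla^{(2)} D_{\overline V}^{k_{p+1}}{\overline V}),\qquad k_1+\dots+k_{p+1}\leq k-1 \] (in particular $G_0=0$).
   Context: $\mathbb R^{1+3}$ with coordinates $(x^0,\dots,x^3)$ and Minkowski metric $m=\mathrm{diag}(-1,1,1,1)$; indices raised/lowered with $m$, $\nabla_\mu=\partial/\partial x^\mu$, $\nabla^{(2)}$ the spacetime Hessian, $\Box=\nabla^\mu\nabla_\mu$, $D_{\overline V}={\overline V}^\mu\nabla_\mu$. Products are schematic, with indices contracted using $m$. *)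

From Stdlib Require Import Reals List Lia.
From Coquelicot Require Import Coquelicot.
Open Scope R_scope.

Inductive idx := I0 | I1 | I2 | I3.
Definition idx_eq_dec (i j : idx) : {i = j} + {i <> j}.
Proof. decide equality. Defined.

Definition pt := idx -> R.

Definition upd (x : pt) (i : idx) (t : R) : pt :=
  fun j => if idx_eq_dec j i then t else x j.

Definition sum4 (f : idx -> R) : R := f I0 + f I1 + f I2 + f I3.

(** Minkowski metric m = diag(-1,1,1,1) (its inverse has the same entries). *)
Definition eta (i : idx) : R := match i with I0 => -1 | _ => 1 end.

Definition partial (i : idx) (f : pt -> R) : pt -> R :=
  fun x => Derive (fun t => f (upd x i t)) (x i).

Definition dpart (l : list idx) (f : pt -> R) : pt -> R := fold_right partial f l.

Definition cont_at (f : pt -> R) (x : pt) : Prop :=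
  forall eps, 0 < eps -> exists del, 0 < del /\
    forall y, (forall i, Rabs (y i - x i) < del) -> Rabs (f y - f x) < eps.

Definition open_dom (Om : pt -> Prop) : Prop :=
  forall x, Om x -> exists del, 0 < del /\
    forall y, (forall i, Rabs (y i - x i) < del) -> Om y.

Definition smooth_on (Om : pt -> Prop) (f : pt -> R) : Prop :=
  forall (l : list idx) (x : pt), Om x ->
    cont_at (dpart l f) x /\
    forall i, ex_derive (fun t => dpart l f (upd x i t)) (x i).

(** Vector fields: V x a = V^a(x). *)
Definition vfield := pt -> idx -> R.

Definition smooth_vf (Om : pt -> Prop) (V : vfield) : Prop :=
  forall a, smooth_on Om (fun y => V y a).

Definition box (f : pt -> R) (x : pt) : R :=
  sum4 (fun i => eta i * partial i (partial i f) x).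

Definition DV (V W : vfield) : vfield :=
  fun x a => sum4 (fun mu => V x mu * partial mu (fun y => W y a) x).

Fixpoint DVk (V : vfield) (k : nat) : vfield :=
  match k with O => V | S k' => DV V (DVk V k') end.

(** Schematic terms
      c * (nabla D^{k_1} V) ... (nabla D^{k_p} V) (nabla^2 D^{k_{p+1}} V)
    with indices contracted using m and one free index.
    Each index slot carries a label (a nat); label 0 is the free index, and
    every other label occurring must occur exactly twice (contracted with m).
    A factor (k,(l1,l2)) of gfacs is nabla_{l1} (D_V^k V)_{l2}; the factor
    hfac = (k,(l1,l2,l3)) is nabla_{l1} nabla_{l2} (D_V^k V)_{l3}.
    All slots are written with lowered indices; contraction of a label is
    then done with m^{-1} (= diag(-1,1,1,1)) and the free index is raised. *)
Record term := mkTerm {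
  coef : R;
  gfacs : list (nat * (nat * nat));
  hfac : nat * (nat * nat * nat) }.

Definition term_labels (t : term) : list nat :=
  flat_map (fun g => fst (snd g) :: snd (snd g) :: nil) (gfacs t) ++
  (let '(_, (l1, l2, l3)) := hfac t in l1 :: l2 :: l3 :: nil).

Definition term_order (t : term) : nat :=
  fold_right Nat.add (fst (hfac t)) (map fst (gfacs t)).

Definition wf_term (t : term) : Prop :=
  count_occ Nat.eq_dec (term_labels t) 0%nat = 1%nat /\
  forall l, In l (term_labels t) -> l <> 0%nat ->
    count_occ Nat.eq_dec (term_labels t) l = 2%nat.

Definition asg := nat -> idx.
Definition updn (al : asg) (n : nat) (i : idx) : asg :=
  fun m => if Nat.eq_dec m n then i else al m.

Fixpoint sum_asg (n : nat) (F : asg -> R) (al : asg) : R :=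
  match n with
  | O => F al
  | S m => sum4 (fun i => sum_asg m F (updn al n i))
  end.

Definition low (V : vfield) (k : nat) (c : idx) : pt -> R :=
  fun y => eta c * DVk V k y c.

Definition gval (V : vfield) (x : pt) (al : asg) (g : nat * (nat * nat)) : R :=
  let '(k, (l1, l2)) := g in partial (al l1) (low V k (al l2)) x.

Definition hval (V : vfield) (x : pt) (al : asg) (h : nat * (nat * nat * nat)) : R :=
  let '(k, (l1, l2, l3)) := h in partial (al l1) (partial (al l2) (low V k (al l3))) x.

Definition contr_weight (t : term) (al : asg) : R :=
  fold_right Rmult 1
    (map (fun l => eta (al l))
       (filter (fun l => negb (Nat.eqb l 0)) (nodup Nat.eq_dec (term_labels t)))).

Definition term_val (V : vfield) (x : pt) (a : idx) (t : term) : R :=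
  coef t * eta a *
  sum_asg (fold_right Nat.max 0%nat (term_labels t))
    (fun al => contr_weight t al *
               fold_right Rmult 1 (map (gval V x al) (gfacs t)) *
               hval V x al (hfac t))
    (fun _ => a).

Definition evalG (G : list term) (V : vfield) (x : pt) (a : idx) : R :=
  fold_right Rplus 0 (map (term_val V x a) G).

(* Commuting [D_V] with the wave operator gives
     Box (D_V f) = D_V (Box f) + 2 nabla^i V^mu nabla_i nabla_mu f + (Box V^mu) nabla_mu f,
   so when [Box V = 0], [Box D_V^(k+1) V] is [D_V (Box D_V^k V)] plus a cross term of the
   required shape.  The span of the schematic terms is stable under [D_V]: by the Leibniz
   rule and the commutator [D_V nabla_i f = nabla_i D_V f - nabla_i V^mu nabla_mu f] (and
   its second-order analogue), [D_V] turns a factor [nabla D_V^j V] or [nabla^2 D_V^j V]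
   into the same factor with [j+1], minus products with one more factor [nabla V] or
   [nabla^2 V] contracted through a fresh index; the total order grows by at most one.  Beyond the product rule, the only analytic
   input is the symmetry of second derivatives of smooth functions. *)

From Stdlib Require Import Reals List Lia FunctionalExtensionality Permutation.
From Coquelicot Require Import Coquelicot.
Open Scope R_scope.

Lemma upd_eq x i t : upd x i t i = t.
Proof. unfold upd; destruct (idx_eq_dec i i); congruence. Qed.

Lemma upd_neq x i j t : j <> i -> upd x i t j = x j.
Proof. intros H; unfold upd; destruct (idx_eq_dec j i); congruence. Qed.

Lemma upd_id x i : upd x i (x i) = x.
Proof.
  apply functional_extensionality; intros j; unfold upd.
  destruct (idx_eq_dec j i); subst; auto.
Qed.

Lemma upd_upd_eq x i s t : upd (upd x i s) i t = upd x i t.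
Proof.
  apply functional_extensionality; intros j; unfold upd.
  destruct (idx_eq_dec j i); auto.
Qed.

Lemma upd_upd_comm x i j s t : i <> j -> upd (upd x i s) j t = upd (upd x j t) i s.
Proof.
  intros H; apply functional_extensionality; intros k; unfold upd.
  destruct (idx_eq_dec k j), (idx_eq_dec k i); subst; congruence.
Qed.

Lemma open_dom_locally Om x : open_dom Om -> Om x -> locally x Om.
Proof.
  intros HO Hx; destruct (HO x Hx) as [d [Hd HOm]].
  exists (mkposreal d Hd); intros y Hy; exact (HOm y Hy).
Qed.

Lemma open_dom_locally_upd Om x i :
  open_dom Om -> Om x -> locally (x i) (fun t => Om (upd x i t)).
Proof.
  intros HO Hx; destruct (HO x Hx) as [d [Hd HOm]].
  exists (mkposreal d Hd); intros t Ht; apply HOm; intros j; unfold upd.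
  destruct (idx_eq_dec j i) as [->|_]; [exact Ht|].
  rewrite Rminus_diag, Rabs_R0; exact Hd.
Qed.

Lemma cont_at_filterlim (f : pt -> R) x :
  cont_at f x <-> filterlim f (locally x) (locally (f x)).
Proof.
  split.
  - intros Hf P [eps HP].
    destruct (Hf eps (cond_pos eps)) as [d [Hd Hy]].
    exists (mkposreal d Hd); intros y Hxy; apply HP, Hy, Hxy.
  - intros Hf eps Heps.
    destruct (Hf (ball (f x) (mkposreal eps Heps)) (locally_ball _ _)) as [d Hd].
    exists d; split; [apply cond_pos|].
    intros y Hy; exact (Hd y Hy).
Qed.

Lemma cont_at_const c x : cont_at (fun _ => c) x.
Proof. apply cont_at_filterlim, filterlim_const. Qed.

Lemma cont_at_plus (f g : pt -> R) x :
  cont_at f x -> cont_at g x -> cont_at (fun y => f y + g y) x.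
Proof.
  rewrite !cont_at_filterlim; intros Hf Hg.
  exact (filterlim_comp_2 _ _ _ Hf Hg (filterlim_plus (V := R_NormedModule) (f x) (g x))).
Qed.

Lemma cont_at_mult (f g : pt -> R) x :
  cont_at f x -> cont_at g x -> cont_at (fun y => f y * g y) x.
Proof.
  rewrite !cont_at_filterlim; intros Hf Hg.
  exact (filterlim_comp_2 _ _ _ Hf Hg (filterlim_mult (K := R_AbsRing) (f x) (g x))).
Qed.

Definition ex_partial (i : idx) (f : pt -> R) (x : pt) : Prop :=
  ex_derive (fun t => f (upd x i t)) (x i).

Section Locality.
Variables (Om : pt -> Prop) (f g : pt -> R).
Hypothesis HO : open_dom Om.
Hypothesis Hfg : forall y, Om y -> f y = g y.

Lemma cont_at_ext_on x : Om x -> cont_at f x -> cont_at g x.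
Proof.
  intros Hx; rewrite !cont_at_filterlim, <- (Hfg x Hx); apply filterlim_ext_loc.
  generalize (open_dom_locally Om x HO Hx); apply filter_imp; exact Hfg.
Qed.

Lemma partial_ext_on i x : Om x -> partial i f x = partial i g x.
Proof.
  intros Hx; apply Derive_ext_loc.
  generalize (open_dom_locally_upd Om x i HO Hx); apply filter_imp; auto.
Qed.

Lemma ex_partial_ext_on i x : Om x -> ex_partial i f x -> ex_partial i g x.
Proof.
  intros Hx; apply ex_derive_ext_loc.
  generalize (open_dom_locally_upd Om x i HO Hx); apply filter_imp; auto.
Qed.

End Locality.

Lemma dpart_ext_on Om (f g : pt -> R) l y : open_dom Om ->
  (forall y, Om y -> f y = g y) -> Om y -> dpart l f y = dpart l g y.
Proof.
  intros HO Hfg; revert y; induction l as [|i l IH]; intros y Hy; [exact (Hfg y Hy)|].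
  apply (partial_ext_on Om); auto.
Qed.

Lemma sum4_ext (f g : idx -> R) : (forall i, f i = g i) -> sum4 f = sum4 g.
Proof. intros H; unfold sum4; rewrite !H; reflexivity. Qed.

Section PartialAlgebra.
Variables (f g : pt -> R) (i : idx) (x : pt).

Lemma partial_plus : ex_partial i f x -> ex_partial i g x ->
  partial i (fun y => f y + g y) x = partial i f x + partial i g x.
Proof. apply Derive_plus. Qed.

Lemma partial_mult : ex_partial i f x -> ex_partial i g x ->
  partial i (fun y => f y * g y) x = partial i f x * g x + f x * partial i g x.
Proof.
  intros Hf Hg; unfold partial.
  rewrite (Derive_mult (fun t => f (upd x i t)) (fun t => g (upd x i t))), upd_id; auto.
Qed.

Lemma partial_scal c : partial i (fun y => c * f y) x = c * partial i f x.
Proof. apply Derive_scal. Qed.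

Lemma ex_partial_plus : ex_partial i f x -> ex_partial i g x ->
  ex_partial i (fun y => f y + g y) x.
Proof. apply (ex_derive_plus (fun t => f (upd x i t)) (fun t => g (upd x i t))). Qed.

Lemma ex_partial_mult : ex_partial i f x -> ex_partial i g x ->
  ex_partial i (fun y => f y * g y) x.
Proof. apply (ex_derive_mult (fun t => f (upd x i t)) (fun t => g (upd x i t))). Qed.

End PartialAlgebra.

Lemma partial_const c i x : partial i (fun _ => c) x = 0.
Proof. unfold partial; apply Derive_const. Qed.

Lemma ex_partial_const c i x : ex_partial i (fun _ => c) x.
Proof. unfold ex_partial; apply ex_derive_const. Qed.

Lemma partial_scal_fun c (f : pt -> R) i :
  partial i (fun y => c * f y) = fun y => c * partial i f y.
Proof. apply functional_extensionality; intros; apply partial_scal. Qed.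

Lemma ex_partial_sum4 (F : idx -> pt -> R) i x : (forall mu, ex_partial i (F mu) x) ->
  ex_partial i (fun y => sum4 (fun mu => F mu y)) x.
Proof.
  intros H; unfold sum4.
  apply (ex_partial_plus _ (F I3)); [|exact (H I3)].
  apply (ex_partial_plus _ (F I2)); [|exact (H I2)].
  exact (ex_partial_plus (F I0) (F I1) i x (H I0) (H I1)).
Qed.

Lemma partial_sum4 (F : idx -> pt -> R) i x : (forall mu, ex_partial i (F mu) x) ->
  partial i (fun y => sum4 (fun mu => F mu y)) x = sum4 (fun mu => partial i (F mu) x).
Proof.
  intros H; unfold sum4.
  assert (H01 := ex_partial_plus (F I0) (F I1) i x (H I0) (H I1)).
  assert (H012 := ex_partial_plus _ (F I2) i x H01 (H I2)).
  rewrite (partial_plus _ (F I3) i x H012 (H I3)), (partial_plus _ (F I2) i x H01 (H I2)),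
    (partial_plus (F I0) (F I1) i x (H I0) (H I1)).
  reflexivity.
Qed.

Lemma dpart_app l1 l2 f : dpart (l1 ++ l2) f = dpart l1 (dpart l2 f).
Proof. apply fold_right_app. Qed.

Section Smoothness.
Variable Om : pt -> Prop.
Hypothesis HO : open_dom Om.

Lemma ex_partial_smooth f i x : smooth_on Om f -> Om x -> ex_partial i f x.
Proof. intros Hf Hx; exact (proj2 (Hf nil x Hx) i). Qed.

Lemma smooth_on_partial f i : smooth_on Om f -> smooth_on Om (partial i f).
Proof.
  intros Hf l; change (partial i f) with (dpart (i :: nil) f).
  rewrite <- dpart_app; exact (Hf _).
Qed.

Lemma smooth_on_ext f g : (forall y, f y = g y) -> smooth_on Om f -> smooth_on Om g.
Proof. intros E; replace g with f; [auto|apply functional_extensionality; auto]. Qed.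

Lemma smooth_on_of_closed (P : (pt -> R) -> Prop) :
  (forall f x, P f -> Om x -> cont_at f x /\ forall i, ex_partial i f x) ->
  (forall f i, P f -> exists g, P g /\ forall y, Om y -> partial i f y = g y) ->
  forall f, P f -> smooth_on Om f.
Proof.
  intros Hbase Hstep f Pf l; revert f Pf.
  induction l as [|i l IH] using rev_ind; intros f Pf x Hx; [exact (Hbase f x Pf Hx)|].
  rewrite dpart_app; simpl.
  destruct (Hstep f i Pf) as [g [Pg Eg]].
  assert (E : forall y, Om y -> dpart l g y = dpart l (partial i f) y).
  { intros y Hy; apply (dpart_ext_on Om); auto; intros z Hz; symmetry; auto. }
  destruct (IH g Pg x Hx) as [Hc Hd]; split.
  - exact (cont_at_ext_on Om _ _ HO E x Hx Hc).
  - intros j; exact (ex_partial_ext_on Om _ _ HO E j x Hx (Hd j)).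
Qed.

Lemma smooth_on_const c : smooth_on Om (fun _ => c).
Proof.
  apply (smooth_on_of_closed (fun f => exists c, forall y, f y = c)); [| |exists c; auto].
  - intros f x [c' Hf] _; rewrite (functional_extensionality _ _ Hf); split.
    + apply cont_at_const.
    + intros; apply ex_partial_const.
  - intros f i [c' Hf]; exists (fun _ => 0); split; [exists 0; auto|].
    intros y _; rewrite (functional_extensionality _ _ Hf); apply partial_const.
Qed.

End Smoothness.

Definition sum_prods (ps : list ((pt -> R) * (pt -> R))) (y : pt) : R :=
  fold_right (fun p acc => fst p y * snd p y + acc) 0 ps.

Definition partial_prods (i : idx) (ps : list ((pt -> R) * (pt -> R))) :=
  flat_map (fun p => (partial i (fst p), snd p) :: (fst p, partial i (snd p)) :: nil) ps.

Section Products.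
Variable Om : pt -> Prop.
Hypothesis HO : open_dom Om.

Definition smooth_pairs (ps : list ((pt -> R) * (pt -> R))) : Prop :=
  List.Forall (fun p => smooth_on Om (fst p) /\ smooth_on Om (snd p)) ps.

Lemma smooth_pairs_partial i ps : smooth_pairs ps -> smooth_pairs (partial_prods i ps).
Proof.
  intros H; apply List.Forall_flat_map; revert H; apply List.Forall_impl; intros p [Hf Hg].
  simpl; repeat apply List.Forall_cons; auto; split; simpl; auto; apply smooth_on_partial; auto.
Qed.

Lemma sum_prods_regular ps x : smooth_pairs ps -> Om x ->
  cont_at (sum_prods ps) x /\ forall i, ex_partial i (sum_prods ps) x.
Proof.
  intros Hps Hx; induction Hps as [|p ps [Hf Hg] _ [IHc IHd]].
  - split; [apply cont_at_const|intros; apply ex_partial_const].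
  - split.
    + apply (cont_at_plus (fun y => fst p y * snd p y)); auto.
      apply cont_at_mult; [apply (Hf nil)|apply (Hg nil)]; auto.
    + intros i; apply (ex_partial_plus (fun y => fst p y * snd p y)); auto.
      apply ex_partial_mult; apply (ex_partial_smooth Om); auto.
Qed.

Lemma partial_sum_prods i ps x : smooth_pairs ps -> Om x ->
  partial i (sum_prods ps) x = sum_prods (partial_prods i ps) x.
Proof.
  intros Hps Hx; induction Hps as [|p ps [Hf Hg] Hps IH]; [apply partial_const|].
  change (partial i (fun y => fst p y * snd p y + sum_prods ps y) x
          = sum_prods (partial_prods i (p :: ps)) x).
  rewrite partial_plus, partial_mult, IH.
  - unfold sum_prods; simpl; ring.
  - apply (ex_partial_smooth Om); auto.
  - apply (ex_partial_smooth Om); auto.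
  - apply ex_partial_mult; apply (ex_partial_smooth Om); auto.
  - apply (sum_prods_regular ps x Hps Hx).
Qed.

Lemma smooth_on_sum_prods ps : smooth_pairs ps -> smooth_on Om (sum_prods ps).
Proof.
  intros Hps.
  apply (smooth_on_of_closed Om HO (fun f => exists ps, smooth_pairs ps /\ f = sum_prods ps));
    [| |exists ps; auto].
  - intros f x [qs [Hqs ->]] Hx; exact (sum_prods_regular qs x Hqs Hx).
  - intros f i [qs [Hqs ->]]; exists (sum_prods (partial_prods i qs)); split.
    + exists (partial_prods i qs); split; [apply smooth_pairs_partial|]; auto.
    + intros y Hy; apply partial_sum_prods; auto.
Qed.

Lemma smooth_on_mult f g : smooth_on Om f -> smooth_on Om g -> smooth_on Om (fun y => f y * g y).
Proof.
  intros Hf Hg; apply (smooth_on_ext Om (sum_prods ((f, g) :: nil))).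
  - intros y; unfold sum_prods; simpl; ring.
  - apply smooth_on_sum_prods; repeat apply List.Forall_cons; auto.
Qed.

Lemma smooth_on_plus f g : smooth_on Om f -> smooth_on Om g -> smooth_on Om (fun y => f y + g y).
Proof.
  intros Hf Hg; apply (smooth_on_ext Om (sum_prods ((f, fun _ => 1) :: (g, fun _ => 1) :: nil))).
  - intros y; unfold sum_prods; simpl; ring.
  - apply smooth_on_sum_prods; repeat apply List.Forall_cons; try apply List.Forall_nil;
      (split; simpl; [assumption|apply smooth_on_const; exact HO]).
Qed.

Lemma smooth_on_scal c f : smooth_on Om f -> smooth_on Om (fun y => c * f y).
Proof. apply smooth_on_mult, smooth_on_const, HO. Qed.

Lemma smooth_on_sum4 (F : idx -> pt -> R) : (forall i, smooth_on Om (F i)) ->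
  smooth_on Om (fun y => sum4 (fun i => F i y)).
Proof. intros H; unfold sum4; repeat apply smooth_on_plus; auto. Qed.

End Products.

Section Slice.
Variables (x : pt) (i j : idx).
Hypothesis Hij : i <> j.

Definition slice (u v : R) : pt := upd (upd x i u) j v.

Lemma slice_i u v : slice u v i = u.
Proof. unfold slice; rewrite upd_neq, upd_eq; auto. Qed.

Lemma slice_j u v : slice u v j = v.
Proof. apply upd_eq. Qed.

Lemma slice_upd_i u v t : upd (slice u v) i t = slice t v.
Proof. unfold slice; rewrite upd_upd_comm, upd_upd_eq; auto. Qed.

Lemma slice_upd_j u v t : upd (slice u v) j t = slice u t.
Proof. apply upd_upd_eq. Qed.

Lemma Derive_slice_i (g : pt -> R) u v :
  Derive (fun t => g (slice t v)) u = partial i g (slice u v).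
Proof.
  unfold partial; rewrite slice_i; apply Derive_ext; intros t; rewrite slice_upd_i; auto.
Qed.

Lemma Derive_slice_j (g : pt -> R) u v :
  Derive (fun t => g (slice u t)) v = partial j g (slice u v).
Proof.
  unfold partial; rewrite slice_j; apply Derive_ext; intros t; rewrite slice_upd_j; auto.
Qed.

Lemma ex_derive_slice_i (g : pt -> R) u v :
  ex_partial i g (slice u v) -> ex_derive (fun t => g (slice t v)) u.
Proof.
  unfold ex_partial; rewrite slice_i; apply ex_derive_ext; intros t; rewrite slice_upd_i; auto.
Qed.

Lemma ex_derive_slice_j (g : pt -> R) u v :
  ex_partial j g (slice u v) -> ex_derive (fun t => g (slice u t)) v.
Proof.
  unfold ex_partial; rewrite slice_j; apply ex_derive_ext; intros t; rewrite slice_upd_j; auto.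
Qed.

Lemma slice_dist u v d : 0 < d -> Rabs (u - x i) < d -> Rabs (v - x j) < d ->
  forall k, Rabs (slice u v k - x k) < d.
Proof.
  intros Hd Hu Hv k; unfold slice, upd.
  destruct (idx_eq_dec k j) as [->|]; [exact Hv|].
  destruct (idx_eq_dec k i) as [->|]; [exact Hu|].
  rewrite Rminus_diag, Rabs_R0; exact Hd.
Qed.

Lemma continuity_2d_slice (g : pt -> R) :
  cont_at g x -> continuity_2d_pt (fun u v => g (slice u v)) (x i) (x j).
Proof.
  intros Hc eps; destruct (Hc eps (cond_pos eps)) as [d [Hd H]].
  exists (mkposreal d Hd); intros u v Hu Hv.
  unfold slice at 2; rewrite !upd_id; apply H, slice_dist; auto.
Qed.

End Slice.

Lemma partial_comm Om f i j x : open_dom Om -> smooth_on Om f -> Om x ->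
  partial i (partial j f) x = partial j (partial i f) x.
Proof.
  intros HO Hf Hx; destruct (idx_eq_dec i j) as [<-|Hij]; [reflexivity|].
  assert (Hs : forall g, smooth_on Om g -> forall u v k,
             Om (slice x i j u v) -> ex_partial k g (slice x i j u v))
    by (intros; apply (ex_partial_smooth Om); auto).
  assert (Eij : forall u v, Derive (fun z => Derive (fun t => f (slice x i j z t)) v) u
                       = partial i (partial j f) (slice x i j u v)).
  { intros u v; rewrite <- Derive_slice_i by auto; apply Derive_ext; intros z.
    apply Derive_slice_j. }
  assert (Eji : forall u v, Derive (fun z => Derive (fun t => f (slice x i j t z)) u) v
                       = partial j (partial i f) (slice x i j u v)).
  { intros u v; rewrite <- Derive_slice_j; apply Derive_ext; intros z.
    apply Derive_slice_i; auto. }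
  assert (Sw := Schwarz (fun u v => f (slice x i j u v)) (x i) (x j)).
  rewrite Eij, Eji in Sw; unfold slice in Sw; rewrite !upd_id in Sw; apply Sw.
  - destruct (HO x Hx) as [d [Hd Hy]]; exists (mkposreal d Hd); intros u v Hu Hv.
    assert (Huv : Om (slice x i j u v)) by (apply Hy, slice_dist; auto).
    repeat split.
    + apply ex_derive_slice_i; auto.
    + apply ex_derive_slice_j; auto.
    + apply (ex_derive_ext (fun z => partial j f (slice x i j z v))).
      { intros z; symmetry; apply Derive_slice_j. }
      apply ex_derive_slice_i; auto; apply Hs; auto; apply smooth_on_partial; auto.
    + apply (ex_derive_ext (fun z => partial i f (slice x i j u z))).
      { intros z; symmetry; apply Derive_slice_i; auto. }
      apply ex_derive_slice_j; auto; apply Hs; auto; apply smooth_on_partial; auto.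
  - apply (continuity_2d_pt_ext (fun u v => partial i (partial j f) (slice x i j u v))).
    { intros; symmetry; apply Eij. }
    apply continuity_2d_slice; auto; apply (Hf (i :: j :: nil) x Hx).
  - apply (continuity_2d_pt_ext (fun u v => partial j (partial i f) (slice x i j u v))).
    { intros; symmetry; apply Eji. }
    apply continuity_2d_slice; auto; apply (Hf (j :: i :: nil) x Hx).
Qed.

Definition Dalong (V : vfield) (f : pt -> R) (x : pt) : R :=
  sum4 (fun mu => V x mu * partial mu f x).

Definition ex_grad (f : pt -> R) (x : pt) : Prop := forall i, ex_partial i f x.

Section DalongAlgebra.
Variables (V : vfield) (x : pt).

Lemma Dalong_plus f g : ex_grad f x -> ex_grad g x ->
  Dalong V (fun y => f y + g y) x = Dalong V f x + Dalong V g x.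
Proof.
  intros Hf Hg; unfold Dalong.
  rewrite (sum4_ext _ (fun mu => V x mu * (partial mu f x + partial mu g x))).
  - unfold sum4; ring.
  - intros mu; rewrite partial_plus; auto.
Qed.

Lemma Dalong_mult f g : ex_grad f x -> ex_grad g x ->
  Dalong V (fun y => f y * g y) x = Dalong V f x * g x + f x * Dalong V g x.
Proof.
  intros Hf Hg; unfold Dalong.
  rewrite (sum4_ext _ (fun mu => V x mu * (partial mu f x * g x + f x * partial mu g x))).
  - unfold sum4; ring.
  - intros mu; rewrite partial_mult; auto.
Qed.

Lemma Dalong_scal c f : Dalong V (fun y => c * f y) x = c * Dalong V f x.
Proof.
  unfold Dalong; rewrite (sum4_ext _ (fun mu => V x mu * (c * partial mu f x))).
  - unfold sum4; ring.
  - intros mu; rewrite partial_scal; auto.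
Qed.

Lemma Dalong_const c : Dalong V (fun _ => c) x = 0.
Proof.
  unfold Dalong; rewrite (sum4_ext _ (fun _ => 0)).
  - unfold sum4; ring.
  - intros mu; rewrite partial_const; ring.
Qed.

Lemma Dalong_sum4 (F : idx -> pt -> R) : (forall nu, ex_grad (F nu) x) ->
  Dalong V (fun y => sum4 (fun nu => F nu y)) x = sum4 (fun nu => Dalong V (F nu) x).
Proof.
  intros H; unfold Dalong at 1.
  rewrite (sum4_ext _ (fun mu => V x mu * sum4 (fun nu => partial mu (F nu) x))).
  - unfold Dalong, sum4; ring.
  - intros mu; rewrite partial_sum4; auto; intros nu; apply H.
Qed.

End DalongAlgebra.

Lemma Dalong_ext_on Om V f g x : open_dom Om -> Om x -> (forall y, Om y -> f y = g y) ->
  Dalong V f x = Dalong V g x.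
Proof.
  intros HO Hx H; apply sum4_ext; intros mu; f_equal; apply (partial_ext_on Om); auto.
Qed.

Lemma Dalong_low V k c : Dalong V (low V k c) = low V (S k) c.
Proof.
  apply functional_extensionality; intros y; unfold low, Dalong; simpl; unfold DV, sum4.
  rewrite !partial_scal; ring.
Qed.

Lemma partial_low_0 V i nu x : partial i (low V 0 nu) x = eta nu * partial i (fun y => V y nu) x.
Proof. apply partial_scal. Qed.

Lemma partial2_low_0 V i l nu x :
  partial i (partial l (low V 0 nu)) x = eta nu * partial i (partial l (fun y => V y nu)) x.
Proof. unfold low; simpl; rewrite partial_scal_fun; apply partial_scal. Qed.

Section VectorField.
Variable Om : pt -> Prop.
Hypothesis HO : open_dom Om.
Variable V : vfield.
Hypothesis HV : smooth_vf Om V.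

Lemma ex_grad_smooth f x : smooth_on Om f -> Om x -> ex_grad f x.
Proof. intros Hf Hx i; apply (ex_partial_smooth Om); auto. Qed.

Lemma smooth_on_Dalong f : smooth_on Om f -> smooth_on Om (Dalong V f).
Proof.
  intros Hf; apply (smooth_on_sum4 Om HO (fun mu y => V y mu * partial mu f y)); intros mu.
  apply smooth_on_mult; auto; apply smooth_on_partial; auto.
Qed.

Lemma smooth_on_DVk k a : smooth_on Om (fun y => DVk V k y a).
Proof.
  revert a; induction k as [|k IH]; intros a; [apply HV|].
  exact (smooth_on_Dalong (fun y => DVk V k y a) (IH a)).
Qed.

Lemma smooth_on_low k c : smooth_on Om (low V k c).
Proof. apply smooth_on_scal, smooth_on_DVk; auto. Qed.

Lemma partial_Dalong f i x : smooth_on Om f -> Om x ->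
  partial i (Dalong V f) x = Dalong V (partial i f) x +
    sum4 (fun mu => partial i (fun y => V y mu) x * partial mu f x).
Proof.
  intros Hf Hx; unfold Dalong at 1.
  assert (Hpf : forall mu, smooth_on Om (partial mu f)) by (intros; apply smooth_on_partial; auto).
  rewrite (partial_sum4 (fun mu y => V y mu * partial mu f y)).
  - rewrite (sum4_ext _ (fun mu => partial i (fun y => V y mu) x * partial mu f x
                                   + V x mu * partial mu (partial i f) x)).
    + unfold Dalong, sum4; ring.
    + intros mu; rewrite partial_mult, (partial_comm Om f i mu x); auto;
        apply (ex_partial_smooth Om); auto.
  - intros mu; apply ex_partial_mult; apply (ex_partial_smooth Om); auto.
Qed.

Lemma partial2_Dalong f i l x : smooth_on Om f -> Om x ->
  partial i (partial l (Dalong V f)) x = Dalong V (partial i (partial l f)) x +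
    sum4 (fun mu => partial i (fun y => V y mu) x * partial l (partial mu f) x
                  + partial i (partial l (fun y => V y mu)) x * partial mu f x
                  + partial l (fun y => V y mu) x * partial i (partial mu f) x).
Proof.
  intros Hf Hx.
  assert (Hpf : forall mu, smooth_on Om (partial mu f)) by (intros; apply smooth_on_partial; auto).
  assert (Hpv : forall mu k, smooth_on Om (partial k (fun y => V y mu)))
    by (intros; apply smooth_on_partial; auto).
  set (S := fun y => sum4 (fun mu => partial l (fun y => V y mu) y * partial mu f y)).
  assert (ES : forall mu, ex_partial i (fun y => partial l (fun y => V y mu) y * partial mu f y) x)
    by (intros mu; apply ex_partial_mult; apply (ex_partial_smooth Om); auto).
  rewrite (partial_ext_on Om _ (fun y => Dalong V (partial l f) y + S y) HO
             (fun y Hy => partial_Dalong f l y Hf Hy) i x Hx).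
  rewrite partial_plus, partial_Dalong; auto.
  - unfold S; rewrite partial_sum4 by auto.
    rewrite (sum4_ext (fun mu => partial i _ x)
               (fun mu => partial i (partial l (fun y => V y mu)) x * partial mu f x
                          + partial l (fun y => V y mu) x * partial i (partial mu f) x)).
    + unfold sum4; rewrite !(partial_comm Om f _ l x) by auto; ring.
    + intros mu; apply partial_mult; apply (ex_partial_smooth Om); auto.
  - apply (ex_partial_smooth Om); [apply smooth_on_Dalong|]; auto.
  - apply ex_partial_sum4; auto.
Qed.

Lemma box_Dalong f x : smooth_on Om f -> Om x ->
  box (Dalong V f) x = Dalong V (box f) x +
    2 * sum4 (fun i => eta i * sum4 (fun mu =>
          partial i (fun y => V y mu) x * partial i (partial mu f) x)) +
    sum4 (fun mu => box (fun y => V y mu) x * partial mu f x).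
Proof.
  intros Hf Hx; unfold box at 1.
  rewrite (sum4_ext _ (fun i => eta i * (Dalong V (partial i (partial i f)) x +
    sum4 (fun mu => partial i (fun y => V y mu) x * partial i (partial mu f) x
                  + partial i (partial i (fun y => V y mu)) x * partial mu f x
                  + partial i (fun y => V y mu) x * partial i (partial mu f) x))))
    by (intros i; rewrite partial2_Dalong; auto).
  unfold box; rewrite (Dalong_sum4 V x (fun i y => eta i * partial i (partial i f) y)).
  - rewrite (sum4_ext (fun i => Dalong V _ x) (fun i => eta i * Dalong V (partial i (partial i f)) x))
      by (intros i; apply Dalong_scal).
    unfold sum4; ring.
  - intros i k; apply (ex_partial_smooth Om); auto.
    apply smooth_on_scal; auto; do 2 apply smooth_on_partial; auto.
Qed.

Lemma Dalong_partial_low j i c x : Om x ->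
  Dalong V (partial i (low V j c)) x = partial i (low V (S j) c) x
    - sum4 (fun nu => eta nu * partial i (low V 0 nu) x * partial nu (low V j c) x).
Proof.
  intros Hx; rewrite <- Dalong_low, partial_Dalong by (auto; apply smooth_on_low).
  unfold sum4; rewrite !partial_low_0; simpl; ring.
Qed.

Lemma Dalong_partial2_low j i l c x : Om x ->
  Dalong V (partial i (partial l (low V j c))) x = partial i (partial l (low V (S j) c)) x
    - sum4 (fun nu => eta nu *
        (partial i (partial l (low V 0 nu)) x * partial nu (low V j c) x
         + partial i (low V 0 nu) x * partial l (partial nu (low V j c)) x
         + partial l (low V 0 nu) x * partial i (partial nu (low V j c)) x)).
Proof.
  intros Hx; rewrite <- Dalong_low, partial2_Dalong by (auto; apply smooth_on_low).
  unfold sum4; rewrite !partial_low_0, !partial2_low_0; simpl; ring.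
Qed.

End VectorField.

Definition max_label (L : list nat) : nat := fold_right Nat.max 0%nat L.

Lemma max_label_ge L m : In m L -> (m <= max_label L)%nat.
Proof.
  induction L as [|a L IH]; simpl; [tauto|].
  intros [->|H]; [lia|specialize (IH H); lia].
Qed.

Lemma fresh_label L : ~ In (S (max_label L)) L.
Proof. intros H; apply max_label_ge in H; lia. Qed.

Lemma max_label_incl L L' : incl L L' -> (max_label L <= max_label L')%nat.
Proof.
  induction L as [|a L IH]; simpl; intros H; [lia|].
  assert (A := max_label_ge L' a (H a (or_introl eq_refl))).
  assert (B : (max_label L <= max_label L')%nat) by (apply IH; intros m Hm; apply H; right; auto).
  lia.
Qed.

Lemma max_label_same_elems L L' : (forall m, In m L <-> In m L') -> max_label L = max_label L'.
Proof. intros H; apply Nat.le_antisymm; apply max_label_incl; intros m; apply H. Qed.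

Definition label_weight (L : list nat) (b : asg) : R :=
  fold_right Rmult 1 (map (fun l => eta (b l))
    (filter (fun l => negb (Nat.eqb l 0)) (nodup Nat.eq_dec L))).

Lemma Permutation_filter {A} (f : A -> bool) l l' :
  Permutation l l' -> Permutation (filter f l) (filter f l').
Proof.
  induction 1; simpl; auto.
  - destruct (f x); auto.
  - destruct (f x), (f y); auto; apply perm_swap.
  - eapply perm_trans; eauto.
Qed.

Lemma Permutation_Rprod (l l' : list R) :
  Permutation l l' -> fold_right Rmult 1 l = fold_right Rmult 1 l'.
Proof. induction 1; simpl; [auto|rewrite IHPermutation; auto|ring|congruence]. Qed.

Lemma label_weight_same_elems L L' b : (forall m, In m L <-> In m L') ->
  label_weight L b = label_weight L' b.
Proof.
  intros H; apply Permutation_Rprod, Permutation_map, Permutation_filter.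
  apply NoDup_Permutation; try apply NoDup_nodup.
  intros m; rewrite !nodup_In; apply H.
Qed.

Lemma label_weight_cons n L b : ~ In n L -> n <> 0%nat ->
  label_weight (n :: L) b = eta (b n) * label_weight L b.
Proof.
  intros H1 H2; unfold label_weight; simpl.
  destruct (in_dec Nat.eq_dec n L); [tauto|]; simpl.
  destruct (Nat.eqb_spec n 0); [tauto|]; reflexivity.
Qed.

Lemma updn_eq b n i : updn b n i n = i.
Proof. unfold updn; destruct (Nat.eq_dec n n); congruence. Qed.

Lemma updn_neq b n i m : m <> n -> updn b n i m = b m.
Proof. intros H; unfold updn; destruct (Nat.eq_dec m n); congruence. Qed.

Lemma updn_comm b m n i j : m <> n -> updn (updn b m i) n j = updn (updn b n j) m i.
Proof.
  intros H; apply functional_extensionality; intros k; unfold updn.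
  destruct (Nat.eq_dec k n), (Nat.eq_dec k m); subst; congruence.
Qed.

Lemma label_weight_updn L b n i : ~ In n L -> label_weight L (updn b n i) = label_weight L b.
Proof.
  intros H; unfold label_weight; f_equal; apply map_ext_in; intros m Hm.
  apply filter_In in Hm; destruct Hm as [Hm _]; apply nodup_In in Hm.
  rewrite updn_neq; auto; intros ->; auto.
Qed.

Definition adds_pair (L' L : list nat) (n : nat) : Prop :=
  forall m, count_occ Nat.eq_dec L' m =
            (count_occ Nat.eq_dec L m + if Nat.eq_dec n m then 2 else 0)%nat.

Lemma adds_pair_In L' L n : adds_pair L' L n -> forall m, In m L' <-> In m (n :: L).
Proof.
  intros H m; rewrite !(count_occ_In Nat.eq_dec), H; simpl.
  destruct (Nat.eq_dec n m); lia.
Qed.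

Lemma adds_pair_max L' L : adds_pair L' L (S (max_label L)) ->
  max_label L' = S (max_label L).
Proof.
  intros H; rewrite (max_label_same_elems L' (S (max_label L) :: L)) by (apply adds_pair_In; auto).
  change (Nat.max (S (max_label L)) (max_label L) = S (max_label L)); lia.
Qed.

Lemma adds_pair_weight L' L b : adds_pair L' L (S (max_label L)) ->
  label_weight L' b = eta (b (S (max_label L))) * label_weight L b.
Proof.
  intros H; rewrite (label_weight_same_elems L' (S (max_label L) :: L)) by (apply adds_pair_In; auto).
  apply label_weight_cons; [apply fresh_label|lia].
Qed.

Definition wf_labels (L : list nat) : Prop :=
  count_occ Nat.eq_dec L 0%nat = 1%nat /\
  forall l, In l L -> l <> 0%nat -> count_occ Nat.eq_dec L l = 2%nat.

Lemma adds_pair_wf L' L : adds_pair L' L (S (max_label L)) -> wf_labels L -> wf_labels L'.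
Proof.
  intros H [W0 W2]; split.
  - rewrite H; destruct (Nat.eq_dec (S (max_label L)) 0); lia.
  - intros l Hl Hl0; rewrite H; destruct (Nat.eq_dec (S (max_label L)) l) as [<-|Hne].
    + rewrite (proj1 (count_occ_not_In Nat.eq_dec _ _) (fresh_label L)); reflexivity.
    + apply (adds_pair_In L' L _ H) in Hl; destruct Hl as [E|Hl]; [congruence|].
      rewrite W2; auto.
Qed.

Definition gfac_labels (g : nat * (nat * nat)) : list nat := fst (snd g) :: snd (snd g) :: nil.

Definition hfac_labels (h : nat * (nat * nat * nat)) : list nat :=
  let '(_, (l1, l2, l3)) := h in l1 :: l2 :: l3 :: nil.

Lemma term_labels_mk c gs h :
  term_labels (mkTerm c gs h) = flat_map gfac_labels gs ++ hfac_labels h.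
Proof. destruct h as [k [[l1 l2] l3]]; reflexivity. Qed.

Definition top_label (t : term) : nat := max_label (term_labels t).

(* [n] is the fresh contraction label introduced by the commutator [D_V, nabla]. *)
Definition hfac_step (n : nat) (c : R) gs (h : nat * (nat * nat * nat)) : list term :=
  let '(j, (l1, l2, l3)) := h in
  mkTerm c gs (S j, (l1, l2, l3)) ::
  mkTerm (-c) (gs ++ (j, (n, l3)) :: nil) (0%nat, (l1, l2, n)) ::
  mkTerm (-c) (gs ++ (0%nat, (l1, n)) :: nil) (j, (l2, n, l3)) ::
  mkTerm (-c) (gs ++ (0%nat, (l2, n)) :: nil) (j, (l1, n, l3)) :: nil.

Fixpoint gfacs_step (n : nat) (c : R) h (pre post : list (nat * (nat * nat))) : list term :=
  match post with
  | nil => nil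
  | g :: rest => let '(j, (l1, l2)) := g in
      mkTerm c (pre ++ (S j, (l1, l2)) :: rest) h ::
      mkTerm (-c) (pre ++ (0%nat, (l1, n)) :: (j, (n, l2)) :: rest) h ::
      gfacs_step n c h (pre ++ g :: nil) rest
  end.

(* [D_V] of a term, by the Leibniz rule and the commutator formulas
   [Dalong_partial_low] and [Dalong_partial2_low] applied to each factor. *)
Definition term_step (t : term) : list term :=
  gfacs_step (S (top_label t)) (coef t) (hfac t) nil (gfacs t) ++
  hfac_step (S (top_label t)) (coef t) (gfacs t) (hfac t).

Definition gfacs_order (gs : list (nat * (nat * nat))) : nat := fold_right Nat.add 0%nat (map fst gs).

Lemma term_order_mk c gs h : term_order (mkTerm c gs h) = (gfacs_order gs + fst h)%nat.
Proof. unfold term_order, gfacs_order; simpl; induction gs as [|g gs IH]; simpl; lia. Qed.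

Lemma gfacs_order_app gs gs' : gfacs_order (gs ++ gs') = (gfacs_order gs + gfacs_order gs')%nat.
Proof.
  unfold gfacs_order; rewrite map_app, fold_right_app.
  induction gs as [|g gs IH]; simpl; [reflexivity|rewrite IH; lia].
Qed.

Definition step_shape (t t' : term) : Prop :=
  (term_labels t' = term_labels t /\ (term_order t' <= S (term_order t))%nat) \/
  (adds_pair (term_labels t') (term_labels t) (S (top_label t)) /\
   (term_order t' <= term_order t)%nat).

Ltac count_labels := intros m; rewrite ?count_occ_app; simpl; repeat destruct Nat.eq_dec; lia.

Lemma adds_pair_gfac A B H n l1 l2 :
  adds_pair ((A ++ l1 :: n :: n :: l2 :: B) ++ H) ((A ++ l1 :: l2 :: B) ++ H) n.
Proof. count_labels. Qed.

Lemma adds_pair_hfac n A l1 l2 l3 :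
  adds_pair ((A ++ n :: l3 :: nil) ++ l1 :: l2 :: n :: nil) (A ++ l1 :: l2 :: l3 :: nil) n /\
  adds_pair ((A ++ l1 :: n :: nil) ++ l2 :: n :: l3 :: nil) (A ++ l1 :: l2 :: l3 :: nil) n /\
  adds_pair ((A ++ l2 :: n :: nil) ++ l1 :: n :: l3 :: nil) (A ++ l1 :: l2 :: l3 :: nil) n.
Proof. repeat split; count_labels. Qed.

Lemma gfacs_step_shape c gs h : forall post pre, pre ++ post = gs ->
  forall t', In t' (gfacs_step (S (top_label (mkTerm c gs h))) c h pre post) ->
  step_shape (mkTerm c gs h) t'.
Proof.
  induction post as [|[j [l1 l2]] rest IH]; intros pre <- t' Hin; simpl in Hin; [tauto|].
  destruct Hin as [<-|[<-|Hin]].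
  - left; split.
    + rewrite !term_labels_mk, !flat_map_app; reflexivity.
    + rewrite !term_order_mk, !gfacs_order_app; unfold gfacs_order; simpl; lia.
  - right; split.
    + unfold top_label; rewrite !term_labels_mk, !flat_map_app; apply adds_pair_gfac.
    + rewrite !term_order_mk, !gfacs_order_app; unfold gfacs_order; simpl; lia.
  - apply (IH (pre ++ (j, (l1, l2)) :: nil)); auto; rewrite <- app_assoc; reflexivity.
Qed.

Lemma hfac_step_shape c gs h t' :
  In t' (hfac_step (S (top_label (mkTerm c gs h))) c gs h) -> step_shape (mkTerm c gs h) t'.
Proof.
  destruct h as [j [[l1 l2] l3]]; intros Hin.
  destruct (adds_pair_hfac (S (top_label (mkTerm c gs (j, (l1, l2, l3)))))
              (flat_map gfac_labels gs) l1 l2 l3) as [Hb [Hc Hd]].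
  simpl in Hin; destruct Hin as [<-|[<-|[<-|[<-|[]]]]];
    [left; split; [reflexivity|]|right; split..];
    rewrite ?term_labels_mk, ?flat_map_app, ?term_order_mk, ?gfacs_order_app;
    unfold gfacs_order; simpl; auto; lia.
Qed.

Lemma term_step_shape t t' : In t' (term_step t) -> step_shape t t'.
Proof.
  destruct t as [c gs h]; unfold term_step; simpl; intros Hin.
  apply in_app_or in Hin; destruct Hin.
  - apply (gfacs_step_shape c gs h gs nil); auto.
  - apply hfac_step_shape; auto.
Qed.

Lemma step_shape_wf t t' : step_shape t t' -> wf_term t -> wf_term t'.
Proof.
  intros [[E _]|[E _]] W; unfold wf_term in *; [rewrite E; auto|].
  exact (adds_pair_wf _ _ E W).
Qed.

Lemma step_shape_top t t' : step_shape t t' ->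
  top_label t' = top_label t \/ top_label t' = S (top_label t).
Proof.
  intros [[E _]|[E _]]; [left; unfold top_label; rewrite E; auto|].
  right; apply adds_pair_max; auto.
Qed.

Section SumAsg.
Variable n : nat.

Lemma sum_asg_ext (F G : asg -> R) al : (forall b, F b = G b) -> sum_asg n F al = sum_asg n G al.
Proof. intros H; replace G with F; [reflexivity|apply functional_extensionality; auto]. Qed.

Lemma sum_asg_plus F G al : sum_asg n (fun b => F b + G b) al = sum_asg n F al + sum_asg n G al.
Proof.
  revert al; induction n as [|m IH]; intros al; simpl; auto.
  rewrite (sum4_ext _ (fun i => sum_asg m F (updn al (S m) i) + sum_asg m G (updn al (S m) i)))
    by (intros; apply IH).
  unfold sum4; ring.
Qed.

Lemma sum_asg_scal c F al : sum_asg n (fun b => c * F b) al = c * sum_asg n F al.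
Proof.
  revert al; induction n as [|m IH]; intros al; simpl; auto.
  rewrite (sum4_ext _ (fun i => c * sum_asg m F (updn al (S m) i))) by (intros; apply IH).
  unfold sum4; ring.
Qed.

Lemma sum_asg_0 al : sum_asg n (fun _ => 0) al = 0.
Proof.
  revert al; induction n as [|m IH]; intros al; simpl; auto.
  rewrite (sum4_ext _ (fun i => 0)) by (intros; apply IH).
  unfold sum4; ring.
Qed.

Lemma sum_asg_sum4 (G : idx -> asg -> R) al :
  sum_asg n (fun b => sum4 (fun nu => G nu b)) al = sum4 (fun nu => sum_asg n (G nu) al).
Proof. unfold sum4 at 1; rewrite !sum_asg_plus; reflexivity. Qed.

Lemma sum_asg_updn_above M F al nu : (n < M)%nat ->
  sum_asg n F (updn al M nu) = sum_asg n (fun b => F (updn b M nu)) al.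
Proof.
  revert al; induction n as [|m IH]; intros al H; simpl; auto.
  apply sum4_ext; intros i; rewrite updn_comm by lia; apply IH; lia.
Qed.

End SumAsg.

Lemma sum_asg_S n F al :
  sum_asg (S n) F al = sum_asg n (fun b => sum4 (fun nu => F (updn b (S n) nu))) al.
Proof.
  rewrite sum_asg_sum4; simpl; apply sum4_ext; intros nu.
  apply sum_asg_updn_above; lia.
Qed.

Definition prod_gfacs V x b (gs : list (nat * (nat * nat))) : R :=
  fold_right Rmult 1 (map (gval V x b) gs).

Definition summand V x (t : term) (b : asg) : R :=
  contr_weight t b * prod_gfacs V x b (gfacs t) * hval V x b (hfac t).

Lemma contr_weight_label_weight t b : contr_weight t b = label_weight (term_labels t) b.
Proof. reflexivity. Qed.

Lemma term_val_summand V x a t :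
  term_val V x a t = coef t * eta a * sum_asg (top_label t) (summand V x t) (fun _ => a).
Proof. reflexivity. Qed.

Lemma evalG_app A B V x a : evalG (A ++ B) V x a = evalG A V x a + evalG B V x a.
Proof.
  unfold evalG; rewrite map_app, fold_right_app.
  induction A as [|t A IH]; simpl; [ring|rewrite IH; ring].
Qed.

Section TermSmoothness.
Variable Om : pt -> Prop.
Hypothesis HO : open_dom Om.
Variable V : vfield.
Hypothesis HV : smooth_vf Om V.

Lemma smooth_on_gval b g : smooth_on Om (fun y => gval V y b g).
Proof. destruct g as [k [l1 l2]]; apply smooth_on_partial, smooth_on_low; auto. Qed.

Lemma smooth_on_hval b h : smooth_on Om (fun y => hval V y b h).
Proof.
  destruct h as [k [[l1 l2] l3]].
  do 2 apply smooth_on_partial; apply smooth_on_low; auto.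
Qed.

Lemma smooth_on_prod_gfacs b gs : smooth_on Om (fun y => prod_gfacs V y b gs).
Proof.
  induction gs as [|g gs IH]; [exact (smooth_on_const Om HO 1)|].
  apply (smooth_on_mult Om HO (fun y => gval V y b g)); auto; apply smooth_on_gval.
Qed.

Lemma smooth_on_summand t b : smooth_on Om (fun y => summand V y t b).
Proof.
  apply (smooth_on_mult Om HO (fun y => contr_weight t b * prod_gfacs V y b (gfacs t))).
  - apply smooth_on_scal, smooth_on_prod_gfacs; auto.
  - apply smooth_on_hval.
Qed.

Lemma smooth_on_sum_asg n (F : pt -> asg -> R) al :
  (forall b, smooth_on Om (fun y => F y b)) -> smooth_on Om (fun y => sum_asg n (F y) al).
Proof.
  revert al; induction n as [|n IH]; intros al H; simpl; auto.
  apply (smooth_on_sum4 Om HO (fun i y => sum_asg n (F y) (updn al (S n) i))); auto.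
Qed.

Lemma Dalong_sum_asg n (F : pt -> asg -> R) al x :
  (forall b, smooth_on Om (fun y => F y b)) -> Om x ->
  Dalong V (fun y => sum_asg n (F y) al) x = sum_asg n (fun b => Dalong V (fun y => F y b) x) al.
Proof.
  revert al; induction n as [|n IH]; intros al H Hx; simpl; auto.
  rewrite (Dalong_sum4 V x (fun i y => sum_asg n (F y) (updn al (S n) i))).
  - apply sum4_ext; intros; apply IH; auto.
  - intros i; apply (ex_grad_smooth Om); auto; apply smooth_on_sum_asg; auto.
Qed.

Lemma smooth_on_term_val a t : smooth_on Om (fun y => term_val V y a t).
Proof.
  apply smooth_on_scal, (smooth_on_sum_asg _ (fun y b => summand V y t b)); auto.
  intros; apply smooth_on_summand.
Qed.

Lemma smooth_on_evalG L a : smooth_on Om (fun y => evalG L V y a).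
Proof.
  induction L as [|t L IH]; [exact (smooth_on_const Om HO 0)|].
  apply (smooth_on_plus Om HO (fun y => term_val V y a t)); auto; apply smooth_on_term_val.
Qed.

End TermSmoothness.

Section StepSemantics.
Variable Om : pt -> Prop.
Hypothesis HO : open_dom Om.
Variable V : vfield.
Hypothesis HV : smooth_vf Om V.
Variable x : pt.
Hypothesis Hx : Om x.

Lemma gval_updn b n nu g : ~ In n (gfac_labels g) -> gval V x (updn b n nu) g = gval V x b g.
Proof.
  destruct g as [k [l1 l2]]; simpl; intros H.
  rewrite !updn_neq; auto; intros ->; apply H; auto.
Qed.

Lemma hval_updn b n nu h : ~ In n (hfac_labels h) -> hval V x (updn b n nu) h = hval V x b h.
Proof.
  destruct h as [k [[l1 l2] l3]]; simpl; intros H.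
  rewrite !updn_neq; auto; intros ->; apply H; auto.
Qed.

Lemma prod_gfacs_updn b n nu gs : ~ In n (flat_map gfac_labels gs) ->
  prod_gfacs V x (updn b n nu) gs = prod_gfacs V x b gs.
Proof.
  induction gs as [|g gs IH]; intros H; [reflexivity|].
  change (~ In n (gfac_labels g ++ flat_map gfac_labels gs)) in H; rewrite in_app_iff in H.
  change (gval V x (updn b n nu) g * prod_gfacs V x (updn b n nu) gs
          = gval V x b g * prod_gfacs V x b gs).
  rewrite gval_updn, IH; tauto.
Qed.

Lemma prod_gfacs_cons b g gs : prod_gfacs V x b (g :: gs) = gval V x b g * prod_gfacs V x b gs.
Proof. reflexivity. Qed.

Lemma prod_gfacs_app b A B : prod_gfacs V x b (A ++ B) = prod_gfacs V x b A * prod_gfacs V x b B.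
Proof.
  unfold prod_gfacs; rewrite map_app.
  induction A as [|g A IH]; simpl; [ring|rewrite IH; ring].
Qed.

Lemma Dalong_gval b n j l1 l2 : n <> l1 -> n <> l2 ->
  Dalong V (fun y => gval V y b (j, (l1, l2))) x = gval V x b (S j, (l1, l2)) -
    sum4 (fun nu => eta nu * gval V x (updn b n nu) (0%nat, (l1, n))
                           * gval V x (updn b n nu) (j, (n, l2))).
Proof.
  intros H1 H2; simpl.
  rewrite (Dalong_partial_low Om HO V HV); auto.
  f_equal; apply sum4_ext; intros nu; rewrite !updn_eq, !updn_neq; auto.
Qed.

Lemma Dalong_hval b n j l1 l2 l3 : n <> l1 -> n <> l2 -> n <> l3 ->
  Dalong V (fun y => hval V y b (j, (l1, l2, l3))) x = hval V x b (S j, (l1, l2, l3)) -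
    sum4 (fun nu => eta nu *
      (hval V x (updn b n nu) (0%nat, (l1, l2, n)) * gval V x (updn b n nu) (j, (n, l3))
       + gval V x (updn b n nu) (0%nat, (l1, n)) * hval V x (updn b n nu) (j, (l2, n, l3))
       + gval V x (updn b n nu) (0%nat, (l2, n)) * hval V x (updn b n nu) (j, (l1, n, l3)))).
Proof.
  intros H1 H2 H3; simpl.
  rewrite (Dalong_partial2_low Om HO V HV); auto.
  f_equal; apply sum4_ext; intros nu; rewrite !updn_eq, !updn_neq; auto; ring.
Qed.

(* The terms of [term_step t] have top label [N] or [S N] (with [N = top_label t]);
   the latter are summed over their extra label here, so that all of them are
   compared with [t] under a common assignment of the labels [1..N]. *)
Definition summand_at (N : nat) (t' : term) (b : asg) : R :=
  if Nat.eqb (top_label t') N then coef t' * summand V x t' b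
  else coef t' * sum4 (fun nu => summand V x t' (updn b (S N) nu)).

Definition summands_at (N : nat) (L : list term) (b : asg) : R :=
  fold_right Rplus 0 (map (fun t' => summand_at N t' b) L).

Lemma summands_at_cons N t L b : summands_at N (t :: L) b = summand_at N t b + summands_at N L b.
Proof. reflexivity. Qed.

Lemma summands_at_app N A B b : summands_at N (A ++ B) b = summands_at N A b + summands_at N B b.
Proof.
  unfold summands_at; rewrite map_app, fold_right_app.
  induction A as [|t A IH]; simpl; [ring|rewrite IH; ring].
Qed.

Lemma summand_at_same N t' b : top_label t' = N -> summand_at N t' b = coef t' * summand V x t' b.
Proof. intros <-; unfold summand_at; rewrite Nat.eqb_refl; reflexivity. Qed.

Lemma summand_at_new N t' b : top_label t' = S N ->
  summand_at N t' b = coef t' * sum4 (fun nu => summand V x t' (updn b (S N) nu)).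
Proof.
  intros E; unfold summand_at; rewrite E.
  replace (Nat.eqb (S N) N) with false; [reflexivity|symmetry; apply Nat.eqb_neq; lia].
Qed.

Lemma summand_same_labels t' t b : term_labels t' = term_labels t ->
  summand V x t' b = contr_weight t b * prod_gfacs V x b (gfacs t') * hval V x b (hfac t').
Proof.
  intros E; unfold summand; rewrite !contr_weight_label_weight, E; reflexivity.
Qed.

Lemma summand_adds_pair t' t b nu : adds_pair (term_labels t') (term_labels t) (S (top_label t)) ->
  summand V x t' (updn b (S (top_label t)) nu) = eta nu * contr_weight t b *
    prod_gfacs V x (updn b (S (top_label t)) nu) (gfacs t') *
    hval V x (updn b (S (top_label t)) nu) (hfac t').
Proof.
  intros E; unfold summand; rewrite !contr_weight_label_weight, (adds_pair_weight _ _ _ E).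
  rewrite updn_eq, label_weight_updn; [reflexivity|apply fresh_label].
Qed.

Lemma gfac_step_sound c pre j l1 l2 rest h b :
  let t := mkTerm c (pre ++ (j, (l1, l2)) :: rest) h in
  let n := S (top_label t) in
  summand_at (top_label t) (mkTerm c (pre ++ (S j, (l1, l2)) :: rest) h) b +
  summand_at (top_label t) (mkTerm (-c) (pre ++ (0%nat, (l1, n)) :: (j, (n, l2)) :: rest) h) b =
  c * contr_weight t b * prod_gfacs V x b pre * Dalong V (fun y => gval V y b (j, (l1, l2))) x
    * prod_gfacs V x b rest * hval V x b h.
Proof.
  intros t n.
  assert (Lt : term_labels t = (flat_map gfac_labels pre ++ l1 :: l2 :: flat_map gfac_labels rest)
                               ++ hfac_labels h)
    by (unfold t; rewrite term_labels_mk, flat_map_app; reflexivity).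
  assert (Hn := fresh_label (term_labels t)); fold (top_label t) n in Hn.
  rewrite Lt, !in_app_iff in Hn; simpl in Hn.
  assert (La : term_labels (mkTerm c (pre ++ (S j, (l1, l2)) :: rest) h) = term_labels t)
    by (rewrite Lt, term_labels_mk, flat_map_app; reflexivity).
  assert (Lb : adds_pair (term_labels (mkTerm (-c) (pre ++ (0%nat, (l1, n)) :: (j, (n, l2)) :: rest) h))
                         (term_labels t) n)
    by (rewrite Lt, term_labels_mk, flat_map_app; apply adds_pair_gfac).
  rewrite summand_at_same, (summand_same_labels _ t) by (auto; unfold top_label; rewrite La; auto).
  rewrite summand_at_new by (apply adds_pair_max; auto).
  rewrite (sum4_ext _ (fun nu => eta nu * contr_weight t b *
      (prod_gfacs V x b pre * (gval V x (updn b n nu) (0%nat, (l1, n)) *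
        (gval V x (updn b n nu) (j, (n, l2)) * prod_gfacs V x b rest))) * hval V x b h)).
  - rewrite (Dalong_gval b n) by (intros E; symmetry in E; tauto).
    simpl coef; simpl gfacs; simpl hfac; rewrite prod_gfacs_app, prod_gfacs_cons.
    unfold sum4; ring.
  - intros nu; rewrite (summand_adds_pair _ t) by auto; simpl gfacs; simpl hfac.
    rewrite prod_gfacs_app, !prod_gfacs_cons, !prod_gfacs_updn, hval_updn; fold n; tauto.
Qed.

Lemma gfacs_step_sound c gs h post : forall pre b, pre ++ post = gs ->
  summands_at (top_label (mkTerm c gs h)) (gfacs_step (S (top_label (mkTerm c gs h))) c h pre post) b =
  c * contr_weight (mkTerm c gs h) b * prod_gfacs V x b pre
    * Dalong V (fun y => prod_gfacs V y b post) x * hval V x b h.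
Proof.
  induction post as [|[j [l1 l2]] rest IH]; intros pre b Hpre.
  - change (fun y => prod_gfacs V y b nil) with (fun _ : pt => 1).
    rewrite Dalong_const; unfold summands_at; simpl; ring.
  - cbn [gfacs_step]; rewrite !summands_at_cons, IH by (rewrite <- app_assoc; auto).
    subst gs; rewrite <- Rplus_assoc, gfac_step_sound.
    change (fun y => prod_gfacs V y b ((j, (l1, l2)) :: rest)) with
      (fun y => gval V y b (j, (l1, l2)) * prod_gfacs V y b rest).
    rewrite Dalong_mult, prod_gfacs_app, prod_gfacs_cons.
    + change (prod_gfacs V x b nil) with 1; ring.
    + apply (ex_grad_smooth Om); auto; apply smooth_on_gval; auto.
    + apply (ex_grad_smooth Om); auto; apply smooth_on_prod_gfacs; auto.
Qed.

Lemma summand_at_append_gfac t c' gs' g' h' b :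
  adds_pair (term_labels (mkTerm c' (gs' ++ g' :: nil) h')) (term_labels t) (S (top_label t)) ->
  ~ In (S (top_label t)) (flat_map gfac_labels gs') ->
  summand_at (top_label t) (mkTerm c' (gs' ++ g' :: nil) h') b =
  c' * sum4 (fun nu => eta nu * contr_weight t b * prod_gfacs V x b gs'
                       * gval V x (updn b (S (top_label t)) nu) g'
                       * hval V x (updn b (S (top_label t)) nu) h').
Proof.
  intros E Hg; rewrite summand_at_new by (apply adds_pair_max; auto); simpl coef; f_equal.
  apply sum4_ext; intros nu; rewrite (summand_adds_pair _ t) by auto; simpl gfacs; simpl hfac.
  rewrite prod_gfacs_app, prod_gfacs_cons, prod_gfacs_updn by auto.
  change (prod_gfacs V x _ nil) with 1; ring.
Qed.

Lemma hfac_step_sound c gs h b :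
  let t := mkTerm c gs h in
  summands_at (top_label t) (hfac_step (S (top_label t)) c gs h) b =
  c * contr_weight t b * prod_gfacs V x b gs * Dalong V (fun y => hval V y b h) x.
Proof.
  intros t; destruct h as [j [[l1 l2] l3]].
  assert (Lt : term_labels t = flat_map gfac_labels gs ++ l1 :: l2 :: l3 :: nil) by reflexivity.
  assert (Hn := fresh_label (term_labels t)); fold (top_label t) in Hn.
  rewrite Lt, in_app_iff in Hn; simpl in Hn.
  destruct (adds_pair_hfac (S (top_label t)) (flat_map gfac_labels gs) l1 l2 l3) as [Hb [Hc Hd]].
  rewrite <- Lt in Hb, Hc, Hd.
  unfold hfac_step; rewrite !summands_at_cons.
  rewrite summand_at_same, (summand_same_labels _ t) by reflexivity.
  rewrite !(summand_at_append_gfac t); try (rewrite term_labels_mk, flat_map_app; assumption); try tauto.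
  rewrite (Dalong_hval b (S (top_label t))) by (intros E; symmetry in E; tauto).
  simpl coef; simpl gfacs; simpl hfac; unfold summands_at; simpl.
  unfold sum4; ring.
Qed.

Lemma term_step_sound t b :
  summands_at (top_label t) (term_step t) b = coef t * Dalong V (fun y => summand V y t b) x.
Proof.
  destruct t as [c gs h]; unfold term_step; simpl coef; simpl gfacs; simpl hfac.
  rewrite summands_at_app, (gfacs_step_sound c gs h gs nil) by reflexivity.
  rewrite hfac_step_sound; unfold summand; simpl gfacs; simpl hfac.
  rewrite (Dalong_mult V x (fun y => contr_weight (mkTerm c gs h) b * prod_gfacs V y b gs)),
    Dalong_scal.
  - change (prod_gfacs V x b nil) with 1; ring.
  - apply (ex_grad_smooth Om); auto; apply smooth_on_scal, smooth_on_prod_gfacs; auto.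
  - apply (ex_grad_smooth Om); auto; apply smooth_on_hval; auto.
Qed.

Lemma evalG_summands_at a N L : (forall t', In t' L -> top_label t' = N \/ top_label t' = S N) ->
  evalG L V x a = eta a * sum_asg N (summands_at N L) (fun _ => a).
Proof.
  induction L as [|t' L IH]; intros HL.
  - change (0 = eta a * sum_asg N (fun _ => 0) (fun _ => a)); rewrite sum_asg_0; ring.
  - change (term_val V x a t' + evalG L V x a
            = eta a * sum_asg N (fun b => summand_at N t' b + summands_at N L b) (fun _ => a)).
    rewrite IH, sum_asg_plus, term_val_summand by (intros; apply HL; simpl; auto).
    destruct (HL t' (or_introl eq_refl)) as [E|E].
    + rewrite (sum_asg_ext N (summand_at N t') (fun b => coef t' * summand V x t' b))
        by (intros; apply summand_at_same; auto).
      rewrite sum_asg_scal, E; ring.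
    + rewrite (sum_asg_ext N (summand_at N t')
                 (fun b => coef t' * sum4 (fun nu => summand V x t' (updn b (S N) nu))))
        by (intros; apply summand_at_new; auto).
      rewrite sum_asg_scal, E, sum_asg_S; ring.
Qed.

Lemma Dalong_term_val a t : Dalong V (fun y => term_val V y a t) x = evalG (term_step t) V x a.
Proof.
  rewrite (evalG_summands_at a (top_label t))
    by (intros; apply step_shape_top, term_step_shape; auto).
  change (fun y => term_val V y a t)
    with (fun y => coef t * eta a * sum_asg (top_label t) (fun b => summand V y t b) (fun _ => a)).
  rewrite Dalong_scal, (Dalong_sum_asg Om HO V (top_label t) (fun y b => summand V y t b))
    by (auto; intros; apply smooth_on_summand; auto).
  rewrite (sum_asg_ext _ (summands_at (top_label t) (term_step t))
             (fun b => coef t * Dalong V (fun y => summand V y t b) x))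
    by (intros; apply term_step_sound).
  rewrite sum_asg_scal; ring.
Qed.

Lemma Dalong_evalG L a : Dalong V (fun y => evalG L V y a) x = evalG (flat_map term_step L) V x a.
Proof.
  induction L as [|t L IH]; [exact (Dalong_const V x 0)|].
  change (Dalong V (fun y => term_val V y a t + evalG L V y a) x
          = evalG (term_step t ++ flat_map term_step L) V x a).
  rewrite Dalong_plus, evalG_app, IH, Dalong_term_val; auto;
    apply (ex_grad_smooth Om); auto; [apply smooth_on_term_val|apply smooth_on_evalG]; auto.
Qed.

End StepSemantics.

(* The cross term [2 nabla^i V^mu nabla_i nabla_mu D_V^k V] of [box_Dalong]. *)
Definition cross_term (k : nat) : term :=
  mkTerm 2 ((0%nat, (1%nat, 2%nat)) :: nil) (k, (1%nat, 2%nat, 0%nat)).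

Fixpoint source_terms (k : nat) : list term :=
  match k with
  | O => nil
  | S k' => cross_term k' :: flat_map term_step (source_terms k')
  end.

Lemma source_terms_wf k t : In t (source_terms k) -> wf_term t /\ (term_order t + 1 <= k)%nat.
Proof.
  revert t; induction k as [|k IH]; intros t Hin; simpl in Hin; [tauto|].
  destruct Hin as [<-|Hin].
  - split; [split; [reflexivity|]|unfold term_order; simpl; lia].
    intros l Hl Hl0; simpl in Hl.
    destruct Hl as [<-|[<-|[<-|[<-|[<-|[]]]]]]; reflexivity || congruence.
  - apply in_flat_map in Hin; destruct Hin as [t0 [H0 H1]].
    destruct (IH t0 H0) as [W O]; assert (Hs := term_step_shape t0 t H1); split.
    + exact (step_shape_wf t0 t Hs W).
    + destruct Hs as [[_ O']|[_ O']]; lia.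
Qed.

Lemma term_val_cross_term V x a k : term_val V x a (cross_term k) =
  2 * sum4 (fun i => eta i * sum4 (fun mu =>
        partial i (fun y => V y mu) x * partial i (partial mu (fun y => DVk V k y a)) x)).
Proof.
  rewrite term_val_summand; change (top_label (cross_term k)) with 2%nat; cbn [sum_asg].
  rewrite (sum4_ext _ (fun i => sum4 (fun j => eta j * eta i * (eta i * partial j (fun y => V y i) x) *
             (eta a * partial j (partial i (fun y => DVk V k y a)) x)))).
  - simpl coef; unfold sum4; destruct a; simpl eta; ring.
  - intros i; apply sum4_ext; intros j; unfold summand; cbn -[partial low].
    rewrite partial_low_0; unfold low; rewrite partial_scal_fun, partial_scal; ring.
Qed.

Theorem lemma2p8 :
  forall k : nat, exists G : list term,
    (forall t, In t G -> wf_term t /\ (term_order t + 1 <= k)%nat) /\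
    forall (Om : pt -> Prop) (V : vfield),
      open_dom Om -> smooth_vf Om V ->
      (forall x, Om x -> forall a, box (fun y => V y a) x = 0) ->
      forall x, Om x -> forall a,
        box (fun y => DVk V k y a) x = evalG G V x a.
Proof.
  intros k; exists (source_terms k); split; [apply source_terms_wf|].
  intros Om V HO HV Hbox; induction k as [|k IH]; intros x Hx a; [apply Hbox; auto|].
  change (box (Dalong V (fun y => DVk V k y a)) x
          = term_val V x a (cross_term k) + evalG (flat_map term_step (source_terms k)) V x a).
  rewrite (box_Dalong Om HO V HV), term_val_cross_term, <- (Dalong_evalG Om HO V HV x Hx)
    by (auto; apply smooth_on_DVk; auto).
  rewrite (Dalong_ext_on Om V _ (fun y => evalG (source_terms k) V y a)) by auto.
  rewrite (sum4_ext (fun mu => box _ x * _) (fun _ => 0)) by (intros mu; rewrite Hbox; auto; ring).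
  unfold sum4; ring.
Qed.
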